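(* Let $\alpha,\beta,\lambda$ be constants with $\beta\ge 3+2\alpha$ and $0<\lambda<\alpha$. Let $U=[0,1]^2$, $S\subset U$ finite with $(0,0)\in S$, and let $t_i$ be a tile of the tiling of $U$ induced by $S$ (as in the context) that is a $\beta$-tile. Then $$\mathrm{area}(t_i)\le \frac{\beta}{2\lambda e^{\beta-3-2\alpha}}\bigl(\mathrm{area}(A_i)+\mathrm{area}(B_i)\bigr).$$
   Context: Tiling: fix a total order of $S$ in which $p$ precedes $q$ whenever $x(p)+y(p)>x(q)+y(q)$ (ties broken arbitrarily but consistently). Process the points in this order; from the current point cast a ray vertically upward and a ray horizontally rightward, each stopping when it hits the boundary of $U$ or a ray cast from a previously processed point. This partitions $U$ into tiles $t_1,\dots,t_n$, one per point $p_i\in S$: $t_i$ is a simple rectilinear polygon with lower-left corner $p_i$, whose bottom edge $a_i$ and left edge $b_i$ lie on the two rays cast from $p_i$, and whose remaining boundary is a staircase from the top end of $b_i$ to the right end of $a_i$. A concave corner of $t_i$ is a vertex with interior angle $270^\circ$. $t_i$ is a $\beta$-tile if every axis-parallel rectangle contained in $t_i$ has area less than $\frac1\beta\mathrm{area}(t_i)$. The right tip of $t_i$ is the smallest-area region among those of the form ''all points of $t_i$ to the right of a vertical line through a concave corner of $t_i$'' that have area at least $\frac{\alpha}{\beta}\mathrm{area}(t_i)$; the upper tip is defined analogously with horizontal lines through concave corners and points above them. The main body $t_i'$ consists of the points of $t_i$ not in either tip; $a_i'$ and $b_i'$ are its bottom and left edges (segments of $a_i$, $b_i$ starting at $p_i$),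 and $|\cdot|$ denotes length. $A_i$ is the parallelogram with vertices $p_i$, $p_i+(|a_i'|,0)$, $p_i+((1+\lambda)|a_i'|,-\lambda|a_i'|)$, $p_i+(\lambda|a_i'|,-\lambda|a_i'|)$ (base $a_i'$, height $\lambda|a_i'|$, lying below $a_i'$, other sides of slope $-1$). $B_i$ is the parallelogram with vertices $p_i$, $p_i+(0,|b_i'|)$, $p_i+(-\lambda|b_i'|,(1+\lambda)|b_i'|)$, $p_i+(-\lambda|b_i'|,\lambda|b_i'|)$. *)

From HB Require Import structures.
From mathcomp Require Import all_boot all_order all_algebra.
From mathcomp Require Import all_classical all_reals all_analysis.
Set Implicit Arguments. Unset Strict Implicit. Unset Printing Implicit Defensive.
Import Order.TTheory GRing.Theory Num.Theory.
Import numFieldNormedType.Exports.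
Local Open Scope classical_set_scope.
Local Open Scope ring_scope.

Section Tiling.
Variable R : realType.
Notation pt := (R * R)%type.

(** A processed point together with the top end of its vertical ray and the
    right end of its horizontal ray. *)
Definition ray_entry := (pt * (R * R))%type.

Definition ray_pts (e : ray_entry) : set pt :=
  let: (s, (T, Rt)) := e in
  [set z | (z.1 = s.1 /\ s.2 <= z.2 <= T) \/ (z.2 = s.2 /\ s.1 <= z.1 <= Rt)].

Definition rays_of (done : seq ray_entry) : set pt :=
  [set z | exists2 e, e \in done & ray_pts e z].

Definition ray_top (done : seq ray_entry) (q : pt) : R :=
  inf [set h | q.2 <= h /\ (rays_of done (q.1, h) \/ h = 1)].

Definition ray_right (done : seq ray_entry) (q : pt) : R :=
  inf [set w | q.1 <= w /\ (rays_of done (w, q.2) \/ w = 1)].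

Definition process_step (done : seq ray_entry) (q : pt) : seq ray_entry :=
  rcons done (q, (ray_top done q, ray_right done q)).

Definition all_rays (s : seq pt) : set pt :=
  rays_of (foldl process_step [::] s).

(** The (interior of the) tile with lower-left corner p: points z of the open
    unit square strictly above-right of p such that no ray meets the
    rectangle ]p.1, z.1] x ]p.2, z.2]. *)
Definition tile (s : seq pt) (p : pt) : set pt :=
  [set z | p.1 < z.1 < 1 /\ p.2 < z.2 < 1 /\
     ~ (exists w, all_rays s w /\ p.1 < w.1 <= z.1 /\ p.2 < w.2 <= z.2)].

Definition area (A : set pt) : \bar R :=
  ((@lebesgue_measure R) \x (@lebesgue_measure R))%E A.

Definition beta_tile (beta : R) (t : set pt) : Prop :=
  forall a b c d : R, a < b -> c < d ->
    [set z : pt | a < z.1 < b /\ c < z.2 < d] `<=` t ->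
    (((b - a) * (d - c))%:E < (beta^-1)%:E * area t)%E.

Definition quadrant (c : pt) (e : R) (a b : bool) : set pt :=
  [set z | (if a then c.1 < z.1 < c.1 + e else c.1 - e < z.1 < c.1) /\
           (if b then c.2 < z.2 < c.2 + e else c.2 - e < z.2 < c.2)].

(** Concave corner (interior angle 270 degrees): near c, exactly three of the
    four quadrants lie in t and the fourth is outside t. *)
Definition concave_corner (t : set pt) (c : pt) : Prop :=
  exists e : R, 0 < e /\ exists a0 b0 : bool,
    quadrant c e a0 b0 `&` t = set0 /\
    forall a b : bool, (a, b) != (a0, b0) -> quadrant c e a b `<=` t.

Definition right_region (t : set pt) (c : pt) : set pt := [set z | t z /\ c.1 < z.1].
Definition upper_region (t : set pt) (c : pt) : set pt := [set z | t z /\ c.2 < z.2].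

Definition is_tip (reg : set pt -> pt -> set pt) (alpha beta : R)
    (t : set pt) (X : set pt) : Prop :=
  let ok c := concave_corner t c /\ ((alpha / beta)%:E * area t <= area (reg t c))%E in
  (exists c, ok c /\ X = reg t c /\
     forall c', ok c' -> (area (reg t c) <= area (reg t c'))%E)
  \/ ((forall c, ~ ok c) /\ X = set0).

Definition is_right_tip := is_tip right_region.
Definition is_upper_tip := is_tip upper_region.

Definition seg_length (A : set R) : R := sup A - inf A.

Definition bottom_edge_len (tb : set pt) (p : pt) : R :=
  seg_length [set x | closure tb (x, p.2)].
Definition left_edge_len (tb : set pt) (p : pt) : R :=
  seg_length [set y | closure tb (p.1, y)].

(** area(A_i): parallelogram with base a', height lambda |a'|. *)
Definition par_area (lambda len : R) : R := len * (lambda * len).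

Definition unit_square : set pt := [set z | 0 <= z.1 <= 1 /\ 0 <= z.2 <= 1].

End Tiling.

From HB Require Import structures.
From mathcomp Require Import all_boot all_order all_algebra.
From mathcomp Require Import all_classical all_reals all_analysis.
From mathcomp Require Import ring lra.
Set Implicit Arguments. Unset Strict Implicit. Unset Printing Implicit Defensive.
Import Order.TTheory GRing.Theory Num.Theory.
Import numFieldNormedType.Exports.
Local Open Scope classical_set_scope.
Local Open Scope ring_scope.

(* A tile t with lower-left corner p is the union of the open rectangles
   ]p, c[ over its outer corners c, and since t is a beta-tile each of them has
   area < M := area(t)/beta.  Each tip has area < (alpha + 1) M: past the last
   concave corner whose right region still has area >= alpha M there is one
   rectangle of area < M followed by a region of area < alpha M.  If the tips
   start at abscissa p.1 + U and ordinate p.2 + Y, the rest of t lies in a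
   union of boxes anchored at p, each of area < M, inside p + [0, U] x [0, Y].
   Such a union lies under the hyperbola xy = M, so its area is at most
   M (1 + ln (U Y / M)); comparing with area(t) = beta M gives
   U Y > M e^(beta - 3 - 2 alpha).  The edges of the main body have lengths
   |a'| >= U and |b'| >= Y, and lambda (|a'|^2 + |b'|^2) >= 2 lambda U Y. *)

(** * Area under a hyperbola *)

Section HyperbolaArea.
Context {R : realType}.
Implicit Types M Y a b c u v : R.

Lemma ln_ge1BV (x : R) : 0 < x -> 1 - x^-1 <= ln x.
Proof.
move=> x0; have xV0 : 0 < x^-1 by rewrite invr_gt0.
have := @le_ln1Dx _ (x^-1 - 1) ltac:(lra).
by rewrite addrC subrK lnV ?posrE //; lra.
Qed.

(* The area of the part of [0, u] x [0, Y] below the hyperbola xy = M, that is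
   the integral of min(Y, M/x) over [0, u]. *)
Definition hyp_area M Y u : R :=
  if u <= M / Y then u * Y else M * (1 + ln (u * Y / M)).

Variables (M Y : R).
Hypotheses (M0 : 0 < M) (Y0 : 0 < Y).

Lemma hyp_area_ge0 u : 0 <= u -> 0 <= hyp_area M Y u.
Proof.
move=> u0; rewrite /hyp_area; case: ifPn => [_|]; first exact/mulr_ge0/ltW.
rewrite -ltNge => /ltW mY_u.
have : 1 <= u * Y / M by rewrite ler_pdivlMr // mul1r -ler_pdivrMr.
by move=> /ln_ge0 h; apply: mulr_ge0; [exact: ltW | lra].
Qed.

Lemma hyp_area_log u : M / Y <= u -> hyp_area M Y u = M * (1 + ln (u * Y / M)).
Proof.
move=> mY_u; rewrite /hyp_area; case: ifPn => // uM.
have <- : M / Y = u by apply/eqP; rewrite eq_le uM mY_u.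
by rewrite divfK ?gt_eqF // divff ?gt_eqF // ln1 addr0 mulr1.
Qed.

Lemma hyp_area_tail a b : M / Y <= a -> a <= b ->
  hyp_area M Y a + (b - a) * (M / b) <= hyp_area M Y b.
Proof.
move=> mY_a ab; have MY0 : 0 < M / Y by rewrite divr_gt0.
have a0 : 0 < a by lra.
have b0 : 0 < b by lra.
rewrite !hyp_area_log //; last exact: le_trans ab.
have lnE : ln (b * Y / M) = ln (a * Y / M) + ln (b / a).
  rewrite -lnM ?posrE ?divr_gt0 ?mulr_gt0 //; congr ln.
  by field; rewrite !gt_eqF.
have := ln_ge1BV (divr_gt0 b0 a0); rewrite invf_div lnE => h.
have -> : (b - a) * (M / b) = M * (1 - a / b) by field; rewrite gt_eqF.
by rewrite -mulrDr ler_wpM2l ?(ltW M0) //; lra.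
Qed.

(* hyp_area has the nonincreasing derivative min(Y, M/x), which is at least v
   on [a, b] when v <= Y and b v <= M. *)
Lemma hyp_area_incr a b v : 0 <= a -> a <= b -> 0 <= v -> v <= Y -> b * v <= M ->
  hyp_area M Y a + (b - a) * v <= hyp_area M Y b.
Proof.
move=> a0 ab v0 vY bvM; have mY0 : 0 < M / Y by rewrite divr_gt0.
have [bm|mb] := leP b (M / Y).
  rewrite /hyp_area bm (le_trans ab bm).
  have : (b - a) * v <= (b - a) * Y by apply: ler_wpM2l; lra.
  lra.
have vMb : v <= M / b by rewrite ler_pdivlMr; [rewrite mulrC | lra].
have [am|ma] := leP a (M / Y).
  have := hyp_area_tail (lexx (M / Y)) (ltW mb).
  have -> : hyp_area M Y a = hyp_area M Y (M / Y) - (M / Y - a) * Y.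
    by rewrite /hyp_area am lexx; ring.
  have : (M / Y - a) * v <= (M / Y - a) * Y by apply: ler_wpM2l; lra.
  have : (b - M / Y) * v <= (b - M / Y) * (M / b) by apply: ler_wpM2l; lra.
  lra.
have := hyp_area_tail (ltW ma) ab.
have : (b - a) * v <= (b - a) * (M / b) by apply: ler_wpM2l; lra.
lra.
Qed.

Lemma le_hyp_area u u' : 0 <= u -> u <= u' -> hyp_area M Y u <= hyp_area M Y u'.
Proof.
move=> u0 uu'; have := @hyp_area_incr u u' 0 u0 uu' (lexx 0) (ltW Y0).
by rewrite mulr0 mulr0 addr0; apply; exact: ltW.
Qed.

Lemma hyp_area_gt_expR c u : 0 <= c -> (1 + c) * M < hyp_area M Y u ->
  M * expR c < u * Y.
Proof.
move=> c0; rewrite /hyp_area; case: ifPn => [uM|].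
  rewrite ler_pdivlMr // in uM; have : 0 <= c * M by rewrite mulr_ge0 // ltW.
  lra.
rewrite -ltNge => mY_u; have u0 : 0 < u by apply: lt_trans mY_u; rewrite divr_gt0.
rewrite mulrC ltr_pM2l // ltrD2l => c_ln.
have uYM0 : 0 < u * Y / M by rewrite !divr_gt0 ?mulr_gt0.
by rewrite -ltr_pdivlMl // mulrC -(lnK uYM0) ltr_expR.
Qed.

End HyperbolaArea.

Lemma exists_lex_max disp (X : orderType disp) (T : eqType) (f g : T -> X) (s : seq T) :
  s != [::] -> exists2 k, k \in s &
    forall c, c \in s -> (f c < f k)%O \/ (f c = f k /\ (g c <= g k)%O).
Proof.
pose lex c d := (f c < f d)%O \/ (f c = f d /\ (g c <= g d)%O).
have lex_refl c : lex c c by right.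
have lex_trans b c d : lex b c -> lex c d -> lex b d.
  move=> [bc|[bc gbc]] [cd|[cd gcd]]; rewrite /lex.
  - by left; exact: lt_trans cd.
  - by left; rewrite -cd.
  - by left; rewrite bc.
  - by right; rewrite bc cd; split; last exact: le_trans gcd.
have lex_total c d : lex c d \/ lex d c.
  rewrite /lex; case: (ltgtP (f c) (f d)) => [?|?|->]; [by left; left|by right; left|].
  by case: (leP (g c) (g d)) => [|/ltW] ?; [left|right]; right.
elim: s => [//|x [|y s] IH] _.
  exists x; first by rewrite mem_seq1.
  by move=> c; rewrite mem_seq1 => /eqP ->; exact: lex_refl.
have [k ks Hk] := IH isT.
have [xk|kx] := lex_total x k.
  exists k; first by rewrite in_cons ks orbT.
  by move=> c; rewrite in_cons => /orP [/eqP ->|/Hk].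
exists x; first by rewrite in_cons eqxx.
move=> c; rewrite in_cons => /orP [/eqP ->|/Hk ck]; first exact: lex_refl.
exact: lex_trans ck kx.
Qed.

(** * Boxes, rectangles and their areas *)

Section PlaneGeometry.
Context {R : realType}.
Local Notation pt := (R * R)%type.
Local Notation swap := (@unstable.swap R R).
Local Notation unit_square := (@unit_square R).
Implicit Types (p q z : pt) (t A B : set pt).

Definition box p q : set pt := [set z | p.1 <= z.1 <= q.1 /\ p.2 <= z.2 <= q.2].
Definition rect p q : set pt := [set z | p.1 < z.1 < q.1 /\ p.2 < z.2 < q.2].
Definition right_of t (x : R) : set pt := [set z | t z /\ x < z.1].
Definition above t (y : R) : set pt := [set z | t z /\ y < z.2].

Lemma boxE p q : box p q = `[p.1, q.1] `*` `[p.2, q.2].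
Proof. by apply/seteqP; split => z /=; rewrite !in_itv. Qed.

Lemma measurable_box p q : measurable (box p q).
Proof. by rewrite boxE; apply: measurableX; exact: measurable_itv. Qed.

Lemma measurable_rect p q : measurable (rect p q).
Proof.
rewrite (_ : rect p q = `]p.1, q.1[ `*` `]p.2, q.2[).
  by apply: measurableX; exact: measurable_itv.
by apply/seteqP; split => z /=; rewrite !in_itv.
Qed.

Lemma measurable_right_of t x : measurable t -> measurable (right_of t x).
Proof.
move=> mt; rewrite (_ : right_of t x = t `&` `]x, +oo[ `*` setT).
  by apply: measurableI => //; apply: measurableX => //; exact: measurable_itv.
by apply/seteqP; split => z [tz]; rewrite /= in_itv andbT // => -[].
Qed.

Lemma measurable_above t y : measurable t -> measurable (above t y).
Proof.
move=> mt; rewrite (_ : above t y = t `&` setT `*` `]y, +oo[).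
  by apply: measurableI => //; apply: measurableX => //; exact: measurable_itv.
by apply/seteqP; split => z [tz]; rewrite /= in_itv andbT // => -[].
Qed.

Lemma area_le A B : measurable A -> measurable B -> A `<=` B -> (area A <= area B)%E.
Proof. by move=> mA mB AB; rewrite /area; apply: le_measure; rewrite ?inE. Qed.

Lemma area_setU_le A B : measurable A -> measurable B ->
  (area (A `|` B) <= area A + area B)%E.
Proof. by move=> mA mB; exact: measureU2. Qed.

Lemma area_box p q : p.1 <= q.1 -> p.2 <= q.2 ->
  area (box p q) = ((q.1 - p.1) * (q.2 - p.2))%:E.
Proof.
have itvE (a b : R) : a <= b ->
    (lebesgue_measure (`[a, b]%classic : set R) = (b - a)%:E)%E.
  rewrite le_eqVlt => /predU1P [->|ab].
    by rewrite set_itv1 lebesgue_measure_set1 subrr.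
  by rewrite lebesgue_measure_itv /= lte_fin ab EFinB.
move=> pq1 pq2; rewrite boxE /area product_measure1E; try exact: measurable_itv.
by rewrite EFinM; congr (_ * _)%E; exact: itvE.
Qed.

Lemma area_unit_square_fin A : measurable A -> A `<=` unit_square ->
  area A \is a fin_num.
Proof.
move=> mA A01; rewrite ge0_fin_numE ?measure_ge0 //.
apply: le_lt_trans (area_le mA (measurable_box (0, 0) (1, 1)) A01) _.
by rewrite area_box //= ltry.
Qed.

Lemma area_swap A : measurable A -> area (swap @^-1` A) = area A.
Proof.
move=> mA; have mswap := @measurable_swap _ _ R R.
rewrite /area [RHS](product_measure_unique
  (m' := pushforward (lebesgue_measure \x lebesgue_measure)%E unstable.swap)) //.
move=> X Y mX mY; rewrite /pushforward /= muleC -product_measure1E //.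
by congr ((lebesgue_measure \x lebesgue_measure)%E _); apply/seteqP; split => -[x y] [].
Qed.

Lemma preimage_swapK A : swap @^-1` (swap @^-1` A) = A.
Proof. by apply/seteqP; split => -[]. Qed.

Lemma closed_unit_square : closed unit_square.
Proof.
rewrite (_ : unit_square = fst @^-1` `[0, 1] `&` snd @^-1` `[0, 1]).
  apply: closedI; apply: preimage_closed; try exact: interval_closed.
  - by move=> z _; exact: cvg_fst.
  - by move=> z _; exact: cvg_snd.
by apply/seteqP; split => z /=; rewrite !in_itv.
Qed.

Lemma closure_sub_unit_square A : A `<=` unit_square -> closure A `<=` unit_square.
Proof. by move=> /closureS; rewrite -(proj1 (closure_id _) closed_unit_square). Qed.

Lemma closure_rect p q z : p.1 <= z.1 < q.1 -> p.2 <= z.2 < q.2 ->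
  closure (rect p q) z.
Proof.
move=> /andP [pz1 zq1] /andP [pz2 zq2] B /nbhs_ballP [e /= e0 eB].
set m := Num.min e (Num.min (q.1 - z.1) (q.2 - z.2)).
have m0 : 0 < m by rewrite !lt_min e0 !subr_gt0 zq1 zq2.
have : m / 2 < m by lra.
rewrite {2}/m !lt_min => /and3P [me m1 m2].
exists (z.1 + m / 2, z.2 + m / 2); split.
  by split; apply/andP; split => /=; lra.
apply: eB; split; rewrite /ball /= opprD addrA subrr add0r normrN gtr0_norm //; lra.
Qed.

Lemma seg_length_ge (S : set R) a b : a < b -> `[a, b[ `<=` S -> S `<=` `[0, 1] ->
  b - a <= seg_length S.
Proof.
move=> ab abS S01; have a_ab : `[a, b[%classic a by rewrite /= in_itv /= lexx ab.
have S_ub : ubound S 1 by move=> x /S01; rewrite /= in_itv => /andP [].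
have S_lb : lbound S 0 by move=> x /S01; rewrite /= in_itv => /andP [].
have infS : inf S <= a by apply: ge_inf (abS a a_ab); exists 0.
have supS : b <= sup S.
  rewrite -[X in X <= _](@sup_itv _ (BLeft a) true b) ?bnd_simp //.
  apply: sup_le; first by move=> x /abS; exact: le_down.
    by exists a.
  by split; [exists a; exact: abS|exists 1].
by rewrite /seg_length; lra.
Qed.

Lemma bottom_edge_len_ge A p q : p.1 < q.1 -> p.2 < q.2 ->
  rect p q `<=` A -> A `<=` unit_square -> q.1 - p.1 <= bottom_edge_len A p.
Proof.
move=> pq1 pq2 qA /closure_sub_unit_square A01; apply: seg_length_ge => // x.
  rewrite /= in_itv /= => /andP [px xq]; apply: (closureS qA).
  by apply: closure_rect; rewrite /= ?px ?xq ?lexx.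
by move=> /A01 [/andP [x0 x1] _]; rewrite /= in_itv /= x0 x1.
Qed.

Lemma left_edge_len_ge A p q : p.1 < q.1 -> p.2 < q.2 ->
  rect p q `<=` A -> A `<=` unit_square -> q.2 - p.2 <= left_edge_len A p.
Proof.
move=> pq1 pq2 qA /closure_sub_unit_square A01; apply: seg_length_ge => // y.
  rewrite /= in_itv /= => /andP [py yq]; apply: (closureS qA).
  by apply: closure_rect; rewrite /= ?py ?yq ?lexx.
by move=> /A01 [_ /andP [y0 y1]]; rewrite /= in_itv /= y0 y1.
Qed.

End PlaneGeometry.

Section Boxes.
Context {R : realType}.
Local Notation pt := (R * R)%type.
Implicit Types (p k : pt) (Cs : seq pt).

Definition boxes p Cs : set pt := [set z | exists2 c, c \in Cs & box p c z].

Lemma boxes_nil p : boxes p [::] = set0.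
Proof. by apply/seteqP; split => z // []. Qed.

Lemma boxes_cons p c Cs : boxes p (c :: Cs) = box p c `|` boxes p Cs.
Proof.
apply/seteqP; split => z.
  by move=> [c' /[!in_cons] /orP [/eqP ->|c'Cs] zc']; [left|right; exists c'].
by move=> [zc|[c' c'Cs zc']]; [exists c; rewrite ?mem_head|exists c'; rewrite ?in_cons ?c'Cs ?orbT].
Qed.

Lemma measurable_boxes p Cs : measurable (boxes p Cs).
Proof.
elim: Cs => [|c Cs IH]; first by rewrite boxes_nil.
by rewrite boxes_cons; apply: measurableU => //; exact: measurable_box.
Qed.

(* If k is the widest box, the boxes not taller than k lie in k, and the part of
   k outside the taller ones is the strip to the right of all of them. *)
Lemma boxes_sub_strip p k Cs : (forall c, c \in Cs -> c.1 <= k.1) ->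
  boxes p Cs `<=` boxes p [seq c <- Cs | k.2 < c.2] `|`
    box (\big[Num.max/p.1]_(c <- [seq c <- Cs | k.2 < c.2]) c.1, p.2) k.
Proof.
move=> k_widest z [c cC [/andP [pz1 zc1] /andP [pz2 zc2]]].
set Cs' := [seq c <- Cs | k.2 < c.2].
have [c2k|k2c] := leP c.2 k.2; last first.
  by left; exists c; [rewrite mem_filter k2c|split; apply/andP].
set x' := \big[Num.max/p.1]_(c <- Cs') c.1.
have [x'z|zx'] := leP x' z.1.
  right; split; apply/andP; split => //; last exact: le_trans c2k.
  exact: le_trans (k_widest c cC).
left; have /hasP [c' c'C zc'] : has (fun c => z.1 < c.1) Cs'.
  apply/negPn/negP => /hasPn z_right; move: zx'; rewrite /x' big_seq ltNge bigmax_le //.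
  by move=> c' /z_right; rewrite -leNgt.
move: (c'C); rewrite mem_filter => /andP [kc' _].
by exists c' => //; split; apply/andP; split => //; [exact: ltW|lra].
Qed.

Lemma area_boxes_le p M Y U Cs : 0 < M -> 0 < Y -> 0 <= U ->
  (forall c, c \in Cs -> [/\ p.1 <= c.1 <= p.1 + U, p.2 <= c.2 <= p.2 + Y &
                            (c.1 - p.1) * (c.2 - p.2) <= M]) ->
  (area (boxes p Cs) <= (hyp_area M Y U)%:E)%E.
Proof.
move=> M0 Y0; have [n] := ubnP (size Cs); elim: n Cs U => // n IH Cs U.
rewrite ltnS => szCs U0 Cs_ok; have [->|Cne] := eqVneq Cs [::].
  by rewrite boxes_nil /area measure0 lee_fin hyp_area_ge0.
have [k kC kmax] := exists_lex_max fst snd Cne.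
have [/andP [pk1 k1U] /andP [pk2 k2Y] kM] := Cs_ok k kC.
have k_widest c : c \in Cs -> c.1 <= k.1 by move=> /kmax [/ltW|[->]].
set Cs' := [seq c <- Cs | k.2 < c.2].
set x' := \big[Num.max/p.1]_(c <- Cs') c.1.
have px' : p.1 <= x' by exact: bigmax_ge_id.
have x'k : x' <= k.1.
  rewrite /x' big_seq; apply: bigmax_le => // c.
  by rewrite mem_filter => /andP [_ /k_widest].
have IH' : (area (boxes p Cs') <= (hyp_area M Y (x' - p.1))%:E)%E.
  apply: IH; rewrite ?subr_ge0 //.
    apply: leq_trans szCs; rewrite size_filter -(count_predC (fun c => k.2 < c.2) Cs).
    by rewrite -addn1 leq_add2l -has_count; apply/hasP; exists k => //=; rewrite ltxx.
  move=> c /[dup] cC'; rewrite mem_filter => /andP [_ cC].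
  have [/andP [pc1 _] c2 cM] := Cs_ok c cC.
  by split => //; rewrite pc1 subrKC le_bigmax_seq.
have strip : hyp_area M Y (x' - p.1) + (k.1 - x') * (k.2 - p.2) <= hyp_area M Y U.
  apply: le_trans (le_hyp_area M0 Y0 (u := k.1 - p.1) _ _); last 2 first.
  - by rewrite subr_ge0.
  - by rewrite lerBlDl.
  have := hyp_area_incr M0 Y0 (a := x' - p.1) (b := k.1 - p.1) (v := k.2 - p.2).
  rewrite opprB addrA subrK; apply; rewrite ?subr_ge0 ?lerD2r //; lra.
have mB' := measurable_boxes p Cs'; have mstrip := measurable_box (x', p.2) k.
apply: le_trans (area_le (measurable_boxes p Cs) (measurableU _ _ mB' mstrip)
  (boxes_sub_strip k_widest)) _.
apply: le_trans (area_setU_le mB' mstrip) _.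
rewrite area_box //=; apply: le_trans (leeD IH' (lexx _)) _.
by rewrite -EFinD lee_fin.
Qed.

End Boxes.

(** * Staircases *)

Section Staircase.
Context {R : realType}.
Local Notation pt := (R * R)%type.

Definition staircase (t : set pt) (p : pt) (C : seq pt) : Prop :=
  t = [set z | exists2 c, c \in C & rect p c z] /\
  forall c, c \in C -> p.1 < c.1 /\ p.2 < c.2.

Lemma exists_pos_le4 (a b c d : R) : 0 < a -> 0 < b -> 0 < c -> 0 < d ->
  exists e, [/\ 0 < e, e <= a, e <= b, e <= c & e <= d].
Proof.
move=> a0 b0 c0 d0; exists (Num.min (Num.min a b) (Num.min c d)).
by rewrite !lt_min a0 b0 c0 d0 !ge_min !lexx ?orbT.
Qed.

Variables (t : set pt) (p : pt) (C : seq pt).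
Hypothesis tC : staircase t p C.

Lemma staircase_mem z : t z <-> exists2 c, c \in C & rect p c z.
Proof. by rewrite tC.1. Qed.

Lemma measurable_staircase : measurable t.
Proof.
have [-> _] := tC; elim: C => [|c C' IH].
  by rewrite (_ : [set z | _] = set0) //; apply/seteqP; split => z // [].
rewrite (_ : [set z | _] = rect p c `|` [set z | exists2 c, c \in C' & rect p c z]).
  by apply: measurableU => //; exact: measurable_rect.
apply/seteqP; split => z.
  by move=> [c' /[!in_cons] /orP [/eqP ->|c'C] zc']; [left|right; exists c'].
by move=> [zc|[c' c'C zc']]; [exists c; rewrite ?mem_head|exists c'; rewrite ?in_cons ?c'C ?orbT].
Qed.

Lemma staircase_nil : C = [::] -> t = set0.
Proof. by move=> C0; rewrite tC.1 C0; apply/seteqP; split => z // []. Qed.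

Lemma right_of_le_corner x : x <= p.1 -> right_of t x = t.
Proof.
move=> xp; apply/seteqP; split => [z [] //|z tz]; split => //.
by have [c _ [/andP [pz _] _]] := (staircase_mem z).1 tz; exact: le_lt_trans pz.
Qed.

Lemma right_of_corner x : right_of t x !=set0 -> exists2 c, c \in C & x < c.1.
Proof.
by move=> [z [/staircase_mem [c cC [/andP [_ zc] _]] xz]]; exists c => //; exact: lt_trans zc.
Qed.

Lemma right_of_widest_corner : C != [::] ->
  exists2 k, k \in C & right_of t k.1 = set0.
Proof.
move=> /(exists_lex_max fst fst) [k kC kmax]; exists k => //.
apply/seteqP; split => z // kz; have [c cC kc] := right_of_corner (ex_intro _ z kz).
by have [|[kcE _]] := kmax c cC; [rewrite ltNge (ltW kc)|move: kc; rewrite kcE ltxx].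
Qed.

Lemma concave_staircase cs css : cs \in C -> css \in C ->
  cs.1 < css.1 -> css.2 < cs.2 ->
  (forall c, c \in C -> cs.1 < c.1 -> c.2 <= css.2) ->
  concave_corner t (cs.1, css.2).
Proof.
move=> csC cssC lt1 lt2 cs_max.
have [[pcs1 _] [_ pcss2]] := (tC.2 cs csC, tC.2 css cssC).
have [e [e0 e1 e2 e3 e4]] := @exists_pos_le4 (cs.1 - p.1) (css.2 - p.2)
  (cs.2 - css.2) (css.1 - cs.1) ltac:(lra) ltac:(lra) ltac:(lra) ltac:(lra).
exists e; split => //; exists true, true; split.
  apply/seteqP; split => z // [[/andP [z1 _] /andP [z2 _]]] /staircase_mem [c cC].
  move=> [/andP [_ zc1] /andP [_ zc2]].
  by have := cs_max c cC (lt_trans z1 zc1); move: z2 zc2 => /=; lra.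
case=> [] []; rewrite ?eqxx //= => _ z [/andP [z1 z1'] /andP [z2 z2']];
  apply/staircase_mem; [exists css|exists cs|exists cs] => //;
  by split; apply/andP; split => /=; lra.
Qed.

Lemma right_of_split x : right_of t x !=set0 ->
  exists2 c, c \in C & [/\ x < c.1,
    right_of t x `<=` box p c `|` right_of t c.1 &
    right_of t c.1 !=set0 -> exists y, concave_corner t (c.1, y)].
Proof.
have right_corners y : right_of t y !=set0 -> [seq c <- C | y < c.1] != [::].
  by move=> /right_of_corner /hasP; rewrite has_filter.
move=> /right_corners /(exists_lex_max snd fst) [cs].
rewrite mem_filter => /andP [xcs csC] cs_max.
have cs_highest c : c \in C -> x < c.1 -> c.2 <= cs.2.
  move=> cC xc; have cC1 : c \in [seq c <- C | x < c.1] by rewrite mem_filter xc.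
  by have [/ltW|[->]] := cs_max c cC1.
exists cs => //; split => //.
  move=> z [tz xz]; have [c cC [/andP [pz1 zc1] /andP [pz2 zc2]]] := (staircase_mem z).1 tz.
  have [zcs|csz] := leP z.1 cs.1; last by right.
  have := cs_highest c cC (lt_trans xz zc1).
  by left; split; apply/andP; split => //; lra.
move=> /right_corners /(exists_lex_max snd fst) [css].
rewrite mem_filter => /andP [cscss cssC] css_max.
exists css.2; apply: concave_staircase => //.
  have cssC1 : css \in [seq c <- C | x < c.1].
    by rewrite mem_filter cssC (lt_trans xcs cscss).
  have [//|[css2 css1]] := cs_max css cssC1.
  by move: cscss; rewrite ltNge css1.
move=> c cC csc; have cC2 : c \in [seq c <- C | cs.1 < c.1] by rewrite mem_filter csc.
by have [/ltW|[->]] := css_max c cC2.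
Qed.
End Staircase.

Section StaircaseSwap.
Context {R : realType}.
Local Notation pt := (R * R)%type.
Local Notation swap := (@unstable.swap R R).
Implicit Types (t : set pt) (p c : pt).

Lemma staircase_swap t p C :
  staircase t p C -> staircase (swap @^-1` t) (swap p) (map swap C).
Proof.
move=> tC; split; last by move=> _ /mapP [c cC ->]; have [] := tC.2 c cC.
apply/seteqP; split => z.
  move=> /(staircase_mem tC) [c cC [zc1 zc2]].
  by exists (swap c); [exact: map_f|split].
move=> [_ /mapP [c cC ->] [zc1 zc2]].
by apply/(staircase_mem tC); exists c => //; split.
Qed.

Lemma concave_corner_swap t c :
  concave_corner t c -> concave_corner (swap @^-1` t) (swap c).
Proof.
move=> [e [e0 [a0 [b0 [empty full]]]]]; exists e; split => //; exists b0, a0; split.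
  apply/seteqP; split => z // [[z1 z2] tz].
  suff : (quadrant c e a0 b0 `&` t) (swap z) by rewrite empty.
  by split.
move=> a b ab z [z1 z2]; apply: (full b a) => //.
by apply: contra ab => /eqP [-> ->].
Qed.

Lemma concave_corner_swapE t c :
  concave_corner (swap @^-1` t) c <-> concave_corner t (swap c).
Proof.
split=> [/concave_corner_swap|/concave_corner_swap]; last by rewrite unstable.swapK.
by rewrite preimage_swapK.
Qed.

Lemma is_right_tip_swap alpha beta t UT : measurable t ->
  is_upper_tip alpha beta t UT ->
  is_right_tip alpha beta (swap @^-1` t) (swap @^-1` UT).
Proof.
move=> mt; have regionE c :
    right_region (swap @^-1` t) c = swap @^-1` (upper_region t (swap c)).
  by apply/seteqP; split => -[].
have areaE c : area (right_region (swap @^-1` t) c) = area (upper_region t (swap c)).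
  by rewrite regionE area_swap //; exact: measurable_above.
rewrite /is_right_tip /is_upper_tip /is_tip /= area_swap //.
case=> [[c [[cc cok] [-> cmin]]]|[nok ->]].
  left; exists (swap c).
  rewrite areaE regionE unstable.swapK concave_corner_swapE unstable.swapK.
  split=> //; split=> // c' [cc' ok']; rewrite areaE.
  by apply: cmin; split; [exact/concave_corner_swapE|rewrite -areaE].
right; split=> [c [/concave_corner_swapE cc]|]; last exact: preimage_set0.
by rewrite areaE => ok; exact: nok (swap c) (conj cc ok).
Qed.
End StaircaseSwap.

(** * Tips *)

Section Tips.
Context {R : realType}.
Local Notation pt := (R * R)%type.

Variables (t : set pt) (p : pt) (C : seq pt) (M : R).
Hypotheses (tC : staircase t p C) (M0 : 0 < M)
  (rectM : forall c, c \in C -> (c.1 - p.1) * (c.2 - p.2) < M).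

Lemma area_right_of_lt x (e : \bar R) : (0 < e)%E ->
  (right_of t x !=set0 -> (area (right_of t x) < e)%E) -> (area (right_of t x) < e)%E.
Proof.
move=> e0 nonempty_lt.
by have [->|/set0P/nonempty_lt //] := eqVneq (right_of t x) set0; rewrite /area measure0.
Qed.

(* Go right to the last abscissa x1 of a concave corner whose right region is
   still large: one step further the right region is small, and in between
   lies a single rectangle of area < M. *)
Lemma right_of_area_lt alpha X : 0 < alpha ->
  (forall c, concave_corner t c -> ((alpha * M)%:E <= area (right_of t c.1))%E ->
     (area (right_of t X) <= area (right_of t c.1))%E) ->
  (area (right_of t X) < ((alpha + 1) * M)%:E)%E.
Proof.
move=> alpha0 X_min; have aM0 : 0 < alpha * M by rewrite mulr_gt0.
pose large (c : pt) := `[< X <= c.1 /\ (exists y, concave_corner t (c.1, y)) /\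
                            ((alpha * M)%:E <= area (right_of t c.1))%E >].
have [x1 [Xx1 beyond_x1]] : exists x1,
    (area (right_of t X) <= area (right_of t x1))%E /\
    forall c, c \in C -> x1 < c.1 -> (exists y, concave_corner t (c.1, y)) ->
      (area (right_of t c.1) < (alpha * M)%:E)%E.
  have [D0|] := eqVneq [seq c <- C | large c] [::].
    exists X; split => // c cC Xc cc; rewrite ltNge; apply/negP => big.
    have : c \in [seq c <- C | large c].
      by rewrite mem_filter cC andbT; apply/asboolP; split => //; exact: ltW.
    by rewrite D0.
  move=> /(exists_lex_max fst fst) [d].
  rewrite mem_filter => /andP [/asboolP [Xd [[y dy] dbig]] _] dmax.
  exists d.1; split; first exact: (X_min (d.1, y)).
  move=> c cC dc cc; rewrite ltNge; apply/negP => big.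
  have /dmax [|[]] : c \in [seq c <- C | large c].
    by rewrite mem_filter cC andbT; apply/asboolP; split => //; exact: le_trans Xd (ltW dc).
  - by rewrite ltNge (ltW dc).
  - by move=> dcE; move: dc; rewrite dcE ltxx.
apply: le_lt_trans Xx1 _; apply: area_right_of_lt.
  by rewrite lte_fin mulr_gt0 //; lra.
move=> /(right_of_split tC) [cs csC [x1cs sub conc]].
have [pcs1 pcs2] := tC.2 cs csC.
have small_cs : (area (right_of t cs.1) < (alpha * M)%:E)%E.
  by apply: area_right_of_lt; rewrite ?lte_fin // => /conc; exact: beyond_x1.
have mt := measurable_staircase tC; have mr := measurable_right_of cs.1 mt.
apply: le_lt_trans (area_le (measurable_right_of _ mt)
  (measurableU _ _ (measurable_box p cs) mr) sub) _.
apply: le_lt_trans (area_setU_le (measurable_box p cs) mr) _.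
rewrite area_box ?ltW // (_ : (alpha + 1) * M = M + alpha * M); last by ring.
by rewrite EFinD lteD // lte_fin rectM.
Qed.

Lemma right_tip_spec alpha beta RT : 0 < alpha -> alpha + 1 <= beta ->
  area t = (beta * M)%:E -> is_right_tip alpha beta t RT ->
  exists XR, [/\ p.1 < XR, RT = right_of t XR,
    (area RT < ((alpha + 1) * M)%:E)%E & exists2 c, c \in C & XR <= c.1].
Proof.
move=> alpha0 alpha_beta tA; have beta0 : 0 < beta by lra.
have aM0 : 0 < alpha * M by rewrite mulr_gt0.
have okE c : ((alpha / beta)%:E * area t <= area (right_region t c))%E =
             ((alpha * M)%:E <= area (right_of t c.1))%E.
  by rewrite tA -EFinM mulrA divfK ?gt_eqF.
case=> [[c [[cc cok] [-> cmin]]]|[_ ->]].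
  rewrite okE in cok; exists c.1.
  have RTlt : (area (right_of t c.1) < ((alpha + 1) * M)%:E)%E.
    by apply: right_of_area_lt => // c' cc' ok'; apply: cmin; rewrite okE.
  split => //.
    rewrite ltNge; apply/negP => /(right_of_le_corner tC) tE; move: RTlt.
    by rewrite tE tA lte_fin ltr_pM2r //; lra.
  have [E|/set0P/(right_of_corner tC) [c' c'C /ltW]] := eqVneq (right_of t c.1) set0.
    by move: cok; rewrite E /area measure0 lee_fin; lra.
  by exists c'.
have [C0|/(right_of_widest_corner tC) [k kC kE]] := eqVneq C [::].
  by move: tA; rewrite (staircase_nil tC C0) /area measure0 => /eqP;
    rewrite eqe eq_sym mulf_eq0 !gt_eqF.
exists k.1; split; rewrite ?kE ?(tC.2 k kC).1 /area ?measure0 //.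
  by rewrite lte_fin mulr_gt0 //; lra.
by exists k.
Qed.
End Tips.

Section UpperTip.
Context {R : realType}.
Local Notation pt := (R * R)%type.
Local Notation swap := (@unstable.swap R R).

Lemma upper_tip_spec (t : set pt) p C M alpha beta UT : staircase t p C -> 0 < M ->
  (forall c, c \in C -> (c.1 - p.1) * (c.2 - p.2) < M) ->
  0 < alpha -> alpha + 1 <= beta ->
  area t = (beta * M)%:E -> is_upper_tip alpha beta t UT ->
  exists YU, [/\ p.2 < YU, UT = above t YU,
    (area UT < ((alpha + 1) * M)%:E)%E & exists2 c, c \in C & YU <= c.2].
Proof.
move=> tC M0 rectM alpha0 alpha_beta tA tip; have mt := measurable_staircase tC.
have rectM' c : c \in map swap C -> (c.1 - (swap p).1) * (c.2 - (swap p).2) < M.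
  by move=> /mapP [c' c'C ->]; rewrite mulrC; exact: rectM.
have tA' : area (swap @^-1` t) = (beta * M)%:E by rewrite area_swap.
have [YU [pYU UTE UTlt [_ /mapP [c cC ->] Yc]]] := right_tip_spec (staircase_swap tC)
  M0 rectM' alpha0 alpha_beta tA' (is_right_tip_swap mt tip).
have UT_above : UT = above t YU.
  by rewrite -[UT]preimage_swapK UTE; apply/seteqP; split => -[].
exists YU; split => //; last by exists c.
by rewrite -area_swap // UT_above; exact: measurable_above.
Qed.
End UpperTip.

(** * The main body *)

Section MainBody.
Context {R : realType}.
Local Notation pt := (R * R)%type.

Variables (t : set pt) (p : pt) (C : seq pt) (M : R).
Hypotheses (tC : staircase t p C) (M0 : 0 < M)
  (rectM : forall c, c \in C -> (c.1 - p.1) * (c.2 - p.2) < M).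

Lemma beta_tile_rect_lt beta : 0 < beta -> area t = (beta * M)%:E ->
  beta_tile beta t -> forall c, c \in C -> (c.1 - p.1) * (c.2 - p.2) < M.
Proof.
move=> beta0 tA tbeta c cC; have [pc1 pc2] := tC.2 c cC.
have := tbeta p.1 c.1 p.2 c.2 pc1 pc2; rewrite tA -EFinM lte_fin mulrA mulVf ?gt_eqF //.
by rewrite mul1r; apply => z zc; apply/(staircase_mem tC); exists c.
Qed.

Lemma rect_sub_main_body c XR YU : c \in C ->
  rect p (Num.min c.1 XR, Num.min c.2 YU) `<=` t `\` (right_of t XR `|` above t YU).
Proof.
move=> cC z [/andP [pz1]]; rewrite lt_min => /andP [zc1 zXR] /andP [pz2].
rewrite lt_min => /andP [zc2 zYU]; split.
  by apply/(staircase_mem tC); exists c => //; split; apply/andP.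
by move=> [[_ /ltW]|[_ /ltW]]; rewrite leNgt ?zXR ?zYU.
Qed.

Lemma main_body_edges XR YU cR cU : t `<=` @unit_square R ->
  p.1 < XR -> p.2 < YU -> cR \in C -> XR <= cR.1 -> cU \in C -> YU <= cU.2 ->
  let tb := t `\` (right_of t XR `|` above t YU) in
  XR - p.1 <= bottom_edge_len tb p /\ YU - p.2 <= left_edge_len tb p.
Proof.
move=> t01 pXR pYU cRC XRcR cUC YUcU tb; have tb01 : tb `<=` @unit_square R.
  by move=> z [/t01].
have [[_ pcR2] [pcU1 _]] := (tC.2 cR cRC, tC.2 cU cUC); split.
  have := bottom_edge_len_ge _ _ (rect_sub_main_body (XR := XR) (YU := YU) cRC) tb01.
  by rewrite /= (min_idPr XRcR); apply => //; rewrite lt_min pYU pcR2.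
have := left_edge_len_ge _ _ (rect_sub_main_body (XR := XR) (YU := YU) cUC) tb01.
by rewrite /= (min_idPr YUcU); apply => //; rewrite lt_min pXR pcU1.
Qed.

Lemma staircase_cover XR YU :
  t `<=` boxes p [seq (Num.min c.1 XR, Num.min c.2 YU) | c <- C] `|`
         right_of t XR `|` above t YU.
Proof.
move=> z tz; have [zYU|YUz] := leP z.2 YU; last by right.
have [zXR|XRz] := leP z.1 XR; last by left; right.
have [c cC [/andP [pz1 zc1] /andP [pz2 zc2]]] := (staircase_mem tC z).1 tz.
left; left; exists (Num.min c.1 XR, Num.min c.2 YU); first exact: (map_f _ cC).
by split; apply/andP; rewrite /= le_min ?(ltW pz1) ?(ltW pz2) ?(ltW zc1) ?(ltW zc2) ?zXR ?zYU.
Qed.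

Lemma main_body_product_gt alpha beta XR YU : 3 + 2 * alpha <= beta ->
  area t = (beta * M)%:E -> p.1 < XR -> p.2 < YU ->
  (area (right_of t XR) < ((alpha + 1) * M)%:E)%E ->
  (area (above t YU) < ((alpha + 1) * M)%:E)%E ->
  M * expR (beta - 3 - 2 * alpha) < (XR - p.1) * (YU - p.2).
Proof.
move=> beta_ge tA pXR pYU RTlt UTlt.
set Cs := [seq (Num.min c.1 XR, Num.min c.2 YU) | c <- C].
have Cs_bound : (area (boxes p Cs) <= (hyp_area M (YU - p.2) (XR - p.1))%:E)%E.
  apply: area_boxes_le; rewrite ?subr_gt0 ?subr_ge0 ?ltW // => _ /mapP [c cC ->] /=.
  have [pc1 pc2] := tC.2 c cC.
  have m1 : p.1 <= Num.min c.1 XR by rewrite le_min !ltW.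
  have m2 : p.2 <= Num.min c.2 YU by rewrite le_min !ltW.
  rewrite !subrKC m1 m2 !ge_min !lexx !orbT; split => //.
  apply: le_trans (ltW (rectM cC)).
  by apply: ler_pM; rewrite ?subr_ge0 ?lerD2r ?ge_min ?lexx.
have mt := measurable_staircase tC.
have mR := measurable_right_of XR mt; have mU := measurable_above YU mt.
have mB := measurable_boxes p Cs; have mBR := measurableU _ _ mB mR.
have Bfin : area (boxes p Cs) \is a fin_num.
  by rewrite ge0_fin_numE ?measure_ge0 // (le_lt_trans Cs_bound) ?ltry.
have : (area t < (hyp_area M (YU - p.2) (XR - p.1) +
                  (alpha + 1) * M + (alpha + 1) * M)%:E)%E.
  apply: le_lt_trans (area_le mt (measurableU _ _ mBR mU) (staircase_cover XR YU)) _.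
  apply: le_lt_trans (area_setU_le mBR mU) _; rewrite !EFinD.
  apply: lteD UTlt; apply: le_lt_trans (area_setU_le mB mR) _.
  exact: lee_ltD Bfin Cs_bound RTlt.
rewrite tA lte_fin => {}tA.
by apply: hyp_area_gt_expR; rewrite ?subr_gt0 //; lra.
Qed.
End MainBody.

(** * Tiles are staircases *)

Section Tiles.
Context {R : realType}.
Local Notation pt := (R * R)%type.

Lemma exists_least_above (l : seq R) x : x < 1 ->
  exists a, [/\ a \in 1 :: l, x < a, a <= 1 & forall q, q \in l -> x < q -> a <= q].
Proof.
move=> x1; elim: l => [|y l [a [al xa a1 a_least]]]; first by exists 1; rewrite mem_head.
have [/andP [xy ya]|] := boolP ((x < y) && (y < a)).
  exists y; split; rewrite ?in_cons ?eqxx ?orbT //; first exact: ltW (lt_le_trans ya a1).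
  move=> q /[!in_cons] /orP [/eqP -> //|ql xq]; exact: le_trans (ltW ya) (a_least q ql xq).
move=> y_out; exists a; split => //.
  by move: al; rewrite !in_cons => /orP [->|->]; rewrite ?orbT.
move=> q /[!in_cons] /orP [/eqP -> xy|]; last exact: a_least.
by move: y_out; rewrite xy /= -leNgt.
Qed.

(* The outer corners have their abscissae among those of the blockers and 1,
   and likewise for their ordinates. *)
Lemma staircase_of_blockers (p : pt) (B : seq pt) : exists C, staircase
  [set z | p.1 < z.1 < 1 /\ p.2 < z.2 < 1 /\ ~ exists2 q, q \in B & q.1 <= z.1 /\ q.2 <= z.2]
  p C.
Proof.
pose blocked (c : pt) := has (fun q : pt => (q.1 < c.1) && (q.2 < c.2)) B.
exists [seq c <- [seq (a, b) | a <- 1 :: map fst B, b <- 1 :: map snd B] |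
         [&& p.1 < c.1, p.2 < c.2, c.1 <= 1, c.2 <= 1 & ~~ blocked c]].
split; last by move=> c; rewrite mem_filter => /andP [/and5P []].
apply/seteqP; split => z.
  move=> [/andP [pz1 z1] [/andP [pz2 z2] unblocked]].
  have [a [aA za a1 a_least]] := exists_least_above (map fst B) z1.
  have [b [bB zb b1 b_least]] := exists_least_above (map snd B) z2.
  exists (a, b); last by split; apply/andP; split.
  rewrite mem_filter; apply/andP; split; last by apply/allpairsP; exists (a, b).
  rewrite /= (lt_trans pz1 za) (lt_trans pz2 zb) a1 b1 /=.
  apply/hasPn => q qB; apply/negP => /andP [qa qb].
  apply: unblocked; exists q => //; split; rewrite leNgt; apply/negP.
  - by move=> /(a_least _ (map_f fst qB)); rewrite leNgt qa.
  - by move=> /(b_least _ (map_f snd qB)); rewrite leNgt qb.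
move=> [c /[!mem_filter] /andP [/and5P [pc1 pc2 c1 c2 unblocked] _]].
move=> [/andP [pz1 zc1] /andP [pz2 zc2]].
split; first by rewrite pz1 (lt_le_trans zc1 c1).
split; first by rewrite pz2 (lt_le_trans zc2 c2).
move=> [q qB [qz1 qz2]]; move/hasPn: unblocked => /(_ q qB).
by rewrite (le_lt_trans qz1 zc1) (le_lt_trans qz2 zc2).
Qed.

(* A ray from s0 that enters the open quadrant above-right of p meets the box
   ]p.1, z.1] x ]p.2, z.2] exactly when s0 <= z coordinatewise. *)
Lemma tile_blockers (s : seq pt) (p : pt) : exists B : seq pt, forall z,
  p.1 < z.1 -> p.2 < z.2 ->
  (exists w, all_rays s w /\ p.1 < w.1 <= z.1 /\ p.2 < w.2 <= z.2) <->
  (exists2 q, q \in B & q.1 <= z.1 /\ q.2 <= z.2).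
Proof.
pose enters (e : ray_entry R) : bool := let: (s0, (T, Rt)) := e in
  ((s0.2 <= T) && (p.2 < T) && (p.1 < s0.1)) ||
  ((s0.1 <= Rt) && (p.1 < Rt) && (p.2 < s0.2)).
exists [seq e.1 | e <- foldl (@process_step R) [::] s & enters e] => z pz1 pz2; split.
  move=> [w [[[s0 [T Rt]] eL] /= [[ws0 /andP [s0w wT]]|[ws0 /andP [s0w wRt]]]]].
    move=> [/andP [pw1 wz1] /andP [pw2 wz2]]; exists s0; last first.
      by rewrite -ws0; split => //; exact: le_trans s0w wz2.
    apply/mapP; exists (s0, (T, Rt)) => //; rewrite mem_filter eL andbT /=.
    by rewrite (le_trans s0w wT) (lt_le_trans pw2 wT) -ws0 pw1.
  move=> [/andP [pw1 wz1] /andP [pw2 wz2]]; exists s0; last first.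
    by rewrite -ws0; split => //; exact: le_trans s0w wz1.
  apply/mapP; exists (s0, (T, Rt)) => //; rewrite mem_filter eL andbT /=.
  by rewrite (le_trans s0w wRt) (lt_le_trans pw1 wRt) -ws0 pw2 orbT.
move=> [_ /mapP [[s0 [T Rt]] /[!mem_filter] /andP [+ eL] ->] /= [s0z1 s0z2]].
move=> /orP [/andP [/andP [s0T pT] ps0]|/andP [/andP [s0Rt pRt] ps0]].
  exists (s0.1, Num.min T z.2).
  split; last by rewrite /= ps0 s0z1 lt_min pT pz2 ge_min lexx orbT.
  by exists (s0, (T, Rt)) => //=; left; rewrite le_min s0T s0z2 ge_min lexx.
exists (Num.min Rt z.1, s0.2).
split; last by rewrite /= ps0 s0z2 lt_min pRt pz1 ge_min lexx orbT.
by exists (s0, (T, Rt)) => //=; right; rewrite le_min s0Rt s0z1 ge_min lexx.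
Qed.

Lemma tile_staircase (s : seq pt) (p : pt) : exists C, staircase (tile s p) p C.
Proof.
have [B blockersE] := tile_blockers s p; have [C tC] := staircase_of_blockers p B.
exists C; congr staircase: tC; apply/seteqP; split => z;
  move=> [/[dup] z1 /andP [pz1 _] [/[dup] z2 /andP [pz2 _] not_blocked]];
  by do 2 split => //; move=> /(blockersE z pz1 pz2).
Qed.

Lemma tile_sub_unit_square (s : seq pt) (p : pt) :
  0 <= p.1 -> 0 <= p.2 -> tile s p `<=` @unit_square R.
Proof.
move=> p1 p2 z [/andP [pz1 z1] [/andP [pz2 z2] _]].
by split; apply/andP; split; lra.
Qed.
End Tiles.

Lemma par_area_ge0 (R : realType) (lambda a : R) : 0 <= lambda -> 0 <= par_area lambda a.
Proof. by move=> l0; rewrite /par_area mulrCA mulr_ge0 // -expr2 sqr_ge0. Qed.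

Lemma le_par_area_sum (R : realType) (lambda u v a b : R) : 0 <= lambda ->
  0 <= u <= a -> 0 <= v <= b ->
  2 * lambda * (u * v) <= par_area lambda a + par_area lambda b.
Proof.
move=> l0 /andP [u0 ua] /andP [v0 vb]; rewrite /par_area.
have uv_ab : u * v <= a * b by apply: ler_pM.
have ab2 : 2 * (a * b) <= a * a + b * b by have := sqr_ge0 (a - b); rewrite expr2; lra.
have -> : a * (lambda * a) + b * (lambda * b) = lambda * (a * a + b * b) by ring.
rewrite -mulrA mulrCA ler_wpM2l //; lra.
Qed.

Lemma par_area_bound (R : realType) (lambda beta M E u v a b : R) :
  0 < lambda -> 0 < beta -> 0 < E -> M * E < u * v -> 0 <= u <= a -> 0 <= v <= b ->
  beta * M <= beta / (2 * lambda * E) * (par_area lambda a + par_area lambda b).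
Proof.
move=> l0 beta0 E0 MEuv ua vb.
rewrite (_ : beta * M = beta / (2 * lambda * E) * (2 * lambda * (M * E))); last first.
  by field; rewrite !gt_eqF.
rewrite ler_wpM2l ?divr_ge0 ?mulr_ge0 ?(ltW beta0) ?(ltW l0) ?(ltW E0) //.
apply: le_trans _ (le_par_area_sum (ltW l0) ua vb).
by rewrite ler_wpM2l ?mulr_ge0 ?ltW.
Qed.

Theorem lemma4 (R : realType) (alpha beta lambda : R)
  (hbeta : 3 + 2 * alpha <= beta) (hlam0 : 0 < lambda) (hlam : lambda < alpha)
  (s : seq (R * R))
  (hs_uniq : uniq s)
  (hs_U : forall q, q \in s -> unit_square q)
  (hs_0 : (0, 0) \in s)
  (hs_order : sorted (fun q r : R * R => r.1 + r.2 <= q.1 + q.2) s)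
  (p : R * R) (hp : p \in s)
  (hbt : beta_tile beta (tile s p))
  (RT UT : set (R * R))
  (hRT : is_right_tip alpha beta (tile s p) RT)
  (hUT : is_upper_tip alpha beta (tile s p) UT) :
  let tb := tile s p `\` (RT `|` UT) in
  (area (tile s p) <=
    (beta / (2 * lambda * expR (beta - 3 - 2 * alpha)))%:E *
    (par_area lambda (bottom_edge_len tb p) + par_area lambda (left_edge_len tb p))%:E)%E.
Proof.
cbv zeta; have [C tC] := tile_staircase s p.
set t := tile s p in tC hbt hRT hUT *.
have [alpha0 beta0] : 0 < alpha /\ 0 < beta by split; lra.
have t01 : t `<=` @unit_square R.
  by have [/andP [? _] /andP [? _]] := hs_U p hp; exact: tile_sub_unit_square.
have /fineK tA := area_unit_square_fin (measurable_staircase tC) t01.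
rewrite -tA -EFinM lee_fin; set A := fine (area t) in tA *.
have [A0|A0] := leP A 0.
  apply: le_trans A0 (mulr_ge0 _ (addr_ge0 _ _)); rewrite ?par_area_ge0 ?ltW //.
  by rewrite divr_gt0 ?mulr_gt0 ?expR_gt0.
pose M := A / beta; have M0 : 0 < M by rewrite divr_gt0.
have AM : A = beta * M by rewrite /M mulrC divfK ?gt_eqF.
have tM : area t = (beta * M)%:E by rewrite -tA AM.
have rectM := beta_tile_rect_lt tC beta0 tM hbt.
have [|XR [pXR -> RTlt [cR cRC XRcR]]] := right_tip_spec tC M0 rectM alpha0 _ tM hRT.
  lra.
have [|YU [pYU -> UTlt [cU cUC YUcU]]] := upper_tip_spec tC M0 rectM alpha0 _ tM hUT.
  lra.
have [a_ge b_ge] := main_body_edges tC t01 pXR pYU cRC XRcR cUC YUcU.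
rewrite AM; apply: (par_area_bound hlam0 beta0 (expR_gt0 _)
  (main_body_product_gt tC M0 rectM hbeta tM pXR pYU RTlt UTlt)).
- by rewrite subr_ge0 (ltW pXR) a_ge.
- by rewrite subr_ge0 (ltW pYU) b_ge.
Qed.
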